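(* Let $\alpha\in\bar C$ and let $\zeta\in\alpha+\mathbb Z$ be such that $\ell_0\ell_r$ has no roots in $Z:=\{\eta\in\alpha+\mathbb Z\mid \eta<\zeta\}$. Then $\{1,S,\ldots,S^{r-1}\}$ is a local integral basis of $A$ at $Z\cup\{\zeta\}$.
   Context: Let $C$ be a field of characteristic zero and $\bar C$ its algebraic closure. Let $\sigma$ be the automorphism of $C(x)$ with $\sigma(f)(x)=f(x+1)$, and $C(x)[S]$ the Ore algebra with $Sf=\sigma(f)S$ for $f\in C(x)$; put $\Delta=S-1$. Fix $L=\ell_0+\ell_1S+\cdots+\ell_rS^r\in C[x][S]$ with $\ell_0\ell_r\neq0$, and let $A=C(x)[S]/C(x)[S]L$ (a left $C(x)[S]$-module); every element of $A$ is uniquely $f_0+f_1S+\cdots+f_{r-1}S^{r-1}$ with $f_i\in C(x)$. For $\alpha\in\bar C$, an operator $P=\sum_i p_iS^i\in C(x)[S]$ acts on sequences $b:\alpha+\mathbb Z\to\bar C((q))$ ($q$ a new indeterminate) by $(P\cdot b)(z)=\sum_i p_i(z+q)\,b(z+i)$. $\operatorname{Sol}_\alpha(L)$ is the set of such $b$ with $L\cdot b=0$ (an $r$-dimensional $\bar C((q))$-vector space); an element $f\in A$ acts on $b\in\operatorname{Sol}_\alpha(L)$ via any representative. For $a\in\bar C((q))$, $\nu_q(a)$ is the smallest exponent with nonzero coefficient ($\nu_q(0)=+\infty$). The value function is $\operatorname{val}_\alpha(f)=\min_{b\in\operatorname{Sol}_\alpha(L)}\big(\nu_q((f\cdot b)(\alpha))-\liminf_{n\to\infty}\nu_q(b(\alpha-n))\big)$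 (with $\infty-\infty=\infty$). $f$ is (locally) integral at $\alpha$ if $\operatorname{val}_\alpha(f)\ge0$. Let $C(x)_\alpha=\{p/q: p,q\in C[x],\ q(\alpha)\ne0\}$; the integral elements at $\alpha$ form a $C(x)_\alpha$-module $\mathcal O_\alpha$, and a basis of this module is a local integral basis at $\alpha$. For $Z\subseteq\bar C$, a basis of $A$ is a local integral basis at $Z$ if it is one at every $\alpha\in Z$. On $\alpha+\mathbb Z$ we write $\beta<\gamma$ if $\beta-\gamma$ is a negative integer. *)

From HB Require Import structures.
From mathcomp Require Import all_boot all_order all_algebra.
From mathcomp Require Import fraction.
From Stdlib Require Import ClassicalEpsilon.
Set Implicit Arguments. Unset Strict Implicit. Unset Printing Implicit Defensive.
Import Order.TTheory GRing.Theory Num.Theory.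
Local Open Scope ring_scope.

Inductive xint := NInf | Fin of int | PInf.

Definition xle (a b : xint) : Prop :=
  match a, b with
  | NInf, _ => True
  | _, PInf => True
  | Fin x, Fin y => (x <= y)%R
  | _, _ => False
  end.

(* a - b, with the convention oo - oo = oo *)
Definition xsub (a b : xint) : xint :=
  match a, b with
  | PInf, _ => PInf
  | _, NInf => PInf
  | Fin x, Fin y => Fin (x - y)
  | Fin _, PInf => NInf
  | NInf, _ => NInf
  end.

Definition is_glb (P : xint -> Prop) (l : xint) :=
  (forall v, P v -> xle l v) /\ (forall m, (forall v, P v -> xle m v) -> xle m l).
Definition is_lub (P : xint -> Prop) (l : xint) :=
  (forall v, P v -> xle v l) /\ (forall m, (forall v, P v -> xle v m) -> xle l m).

Definition xinf (P : xint -> Prop) : xint := epsilon (inhabits PInf) (is_glb P).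
Definition xsup (P : xint -> Prop) : xint := epsilon (inhabits PInf) (is_lub P).

Definition xliminf (u : nat -> xint) : xint :=
  xsup (fun y => exists N : nat, y = xinf (fun v => exists n : nat, (N <= n)%N /\ v = u n)).

(* a Laurent series is represented by its coefficient function int -> K
   (coefficient of q^n), subject to being bounded below *)
Definition laurent (K : Type) := int -> K.

Section Laurent.
Variable K : nzRingType.

Definition is_laurent (a : laurent K) : Prop :=
  exists N : int, forall n : int, n < N -> a n = 0.

Definition lzero : laurent K := fun _ => 0.

(* a lower bound for the support (meaningful when is_laurent a) *)
Definition lbound (a : laurent K) : int :=
  epsilon (inhabits 0) (fun N : int => forall n : int, n < N -> a n = 0).

Definition lmul (a b : laurent K) : laurent K :=
  fun n => let N := lbound a in let M := lbound b in
   \sum_(j < (absz (n - N - M)%R).+1) a (N + j%:Z) * b (n - N - j%:Z).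

(* q-adic valuation nu_q : smallest exponent with nonzero coefficient, +oo for 0 *)
Definition nu (a : laurent K) : xint := xinf (fun v => exists n : int, a n != 0 /\ v = Fin n).

(* the power series P(z+q) of a polynomial P in K[x] *)
Definition polyAt (P : {poly K}) (z : K) : laurent K :=
  fun n => match n with Posz k => (P \Po ('X + z%:P))`_k | Negz _ => 0 end.
End Laurent.

Section Setting.
Variables (C : fieldType) (K : closedFieldType) (iota : {rmorphism C -> K}).
(* K plays the role of the algebraic closure \bar C, iota the embedding C -> \bar C *)
Variables (r : nat) (ell : 'I_r.+1 -> {poly C}).
(* L = \sum_(i <= r) ell_i S^i *)

Local Notation RF := {fraction {poly C}}.
Local Notation "p ^i" := (map_poly iota p) (at level 2, format "p ^i").

(* the Laurent expansion  f(z+q)  of a rational function f in C(x) at z in \bar C *)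
Definition ratAt (f : RF) (z : K) : laurent K :=
  epsilon (inhabits (lzero K)) (fun e => is_laurent e /\
    exists p d : {poly C}, d != 0 /\ f = (tofrac p) / (tofrac d) /\
      lmul (polyAt d^i z) e = polyAt p^i z).

Definition in_coset (alpha z : K) : Prop := exists n : int, z = alpha + n%:~R.

(* Sol_alpha(L): sequences b : alpha+Z -> \bar C((q)) with L.b = 0, where
   (L.b)(z) = \sum_i ell_i(z+q) b(z+i) *)
Definition Sol (alpha : K) (b : K -> laurent K) : Prop :=
  (forall z, in_coset alpha z -> is_laurent (b z)) /\
  (forall z, in_coset alpha z ->
     (fun n => \sum_(i < r.+1) lmul (polyAt (ell i)^i z) (b (z + (i : nat)%:R)) n)
     = lzero K).

(* elements of A = C(x)[S]/C(x)[S]L are given by their unique normal form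
   f_0 + f_1 S + ... + f_(r-1) S^(r-1) *)
Definition elemA := 'I_r -> RF.

Definition actA (f : elemA) (b : K -> laurent K) (z : K) : laurent K :=
  fun n => \sum_(i < r) lmul (ratAt (f i) z) (b (z + (i : nat)%:R)) n.

Definition val (alpha : K) (f : elemA) : xint :=
  xinf (fun v => exists b, Sol alpha b /\
     v = xsub (nu (actA f b alpha)) (xliminf (fun n => nu (b (alpha - n%:R))))).

Definition integral_at (alpha : K) (f : elemA) : Prop := xle (Fin 0) (val alpha f).

Definition in_local (alpha : K) (g : RF) : Prop :=
  exists p d : {poly C}, (d^i).[alpha] != 0 /\ g = (tofrac p) / (tofrac d).

Definition lincomb (c : 'I_r -> RF) (B : 'I_r -> elemA) : elemA :=
  fun i => \sum_(j < r) c j * B j i.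

(* B is a basis of the C(x)_alpha-module O_alpha of integral elements at alpha *)
Definition local_integral_basis (alpha : K) (B : 'I_r -> elemA) : Prop :=
  (forall j, integral_at alpha (B j)) /\
  (forall f, integral_at alpha f ->
     exists c : 'I_r -> RF, (forall j, in_local alpha (c j)) /\ f = lincomb c B) /\
  (forall c : 'I_r -> RF, (forall j, in_local alpha (c j)) ->
     lincomb c B = (fun _ => 0) -> forall j, c j = 0).

Definition Spowers : 'I_r -> elemA := fun j i => (i == j)%:R.

End Setting.

From Pilot Require Import Defs.
From HB Require Import structures.
From mathcomp Require Import all_boot all_order all_algebra.
From mathcomp Require Import fraction generic_quotient zify.
From Stdlib Require Import ClassicalEpsilon Classical FunctionalExtensionality.
Set Implicit Arguments. Unset Strict Implicit. Unset Printing Implicit Defensive.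
Import Order.TTheory GRing.Theory Num.Theory.
Local Open Scope ring_scope.

(* At every point left of [beta] both [ell_0(z+q)] and [ell_r(z+q)] are units of K[[q]], so
   there the recurrence [L.b = 0] can be solved for [b(z+r)] as well as for [b(z)] without
   lowering q-adic orders.  Integrality of [S^j]: if the orders of [b(beta-m)] stayed above [n]
   for all large [m], solving forward from [r] consecutive such points would keep [b(beta+j)]
   above [n] as well, so [nu_q(b(beta+j))] dominates the liminf.  Completeness: the solution
   with [b(beta+k) = delta_ik] for [0 <= k < r], continued backwards, takes power series values
   left of [beta], while [(f.b)(beta) = f_i(beta+q)]; integrality of [f] thus forces
   [f_i(beta+q)] to be a power series, i.e. [f_i] lies in [C(x)_beta]. *)

Section LaurentSeries.
Variable K : fieldType.
Implicit Types a b c : laurent K.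

Definition vanish_below a (m : int) := forall n : int, n < m -> a n = 0.

Lemma vanish_below_le a m m' : vanish_below a m -> m' <= m -> vanish_below a m'.
Proof. by move=> h le n ltn; apply: h; exact: lt_le_trans ltn le. Qed.

Lemma vanish_below_laurent a m : vanish_below a m -> is_laurent a.
Proof. by move=> h; exists m. Qed.

Lemma lbound_vanish a : is_laurent a -> vanish_below a (lbound a).
Proof. exact: epsilon_spec. Qed.

(* [lmul] sums over a window fixed by [lbound]; [csum] lets the window vary. *)
Definition csum a b (lo : int) (k : nat) (n : int) :=
  \sum_(j < k) a (lo + j%:Z) * b (n - lo - j%:Z).

Lemma csum_padr a b B lo k n t : vanish_below b B -> n - B - lo < k%:Z ->
  csum a b lo k n = csum a b lo (k + t) n.
Proof.
move=> hb hk; elim: t => [|t IH]; first by rewrite addn0.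
by rewrite IH addnS /csum big_ord_recr /= hb ?mulr0 ?addr0 //; lia.
Qed.

Lemma csum_padl a b lo k n t : vanish_below a lo ->
  csum a b (lo - t%:Z) (k + t) n = csum a b lo k n.
Proof.
move=> ha; elim: t => [|t IH]; first by rewrite subr0 addn0.
rewrite addnS -IH /csum big_ord_recl /= ha ?mul0r ?add0r; last by lia.
by apply: eq_bigr => j _ /=; congr (a _ * b _); rewrite /bump /=; lia.
Qed.

Lemma csum_eq a b B lo1 lo2 k1 k2 n :
  vanish_below a lo1 -> vanish_below a lo2 -> vanish_below b B ->
  n - B - lo1 < k1%:Z -> n - B - lo2 < k2%:Z ->
  csum a b lo1 k1 n = csum a b lo2 k2 n.
Proof.
wlog le21 : lo1 lo2 k1 k2 / lo2 <= lo1.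
  move=> W h1 h2 hb c1 c2; case: (lerP lo2 lo1) => l; first exact: W.
  by symmetry; apply: W => //; exact: ltW.
move=> h1 h2 hb c1 c2.
have e : lo2 = lo1 - (absz (lo1 - lo2))%:Z by lia.
rewrite (csum_padr a k2 hb c1) -(csum_padl b (k1 + k2) n (absz (lo1 - lo2)) h1) -e.
by rewrite (csum_padr a (k1 + absz (lo1 - lo2)) hb c2); congr csum; lia.
Qed.

Lemma lmulE a b A B k n : vanish_below a A -> vanish_below b B ->
  n - B - A < k%:Z -> lmul a b n = csum a b A k n.
Proof.
move=> ha hb hk.
have hN := lbound_vanish (vanish_below_laurent ha).
have hM := lbound_vanish (vanish_below_laurent hb).
have hBM : vanish_below b (Num.max B (lbound b)).
  by move=> m; rewrite lt_max => /orP [] h; [exact: hb | exact: hM].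
by apply: (csum_eq hN ha hBM); lia.
Qed.

Lemma lmul_vanish a b A B : vanish_below a A -> vanish_below b B ->
  vanish_below (lmul a b) (A + B).
Proof.
move=> ha hb n hn; rewrite (lmulE (k := 1) ha hb); last by lia.
by rewrite /csum big_ord1 /= hb ?mulr0 //; lia.
Qed.

Lemma lmul_lead a b A B : vanish_below a A -> vanish_below b B ->
  lmul a b (A + B) = a A * b B.
Proof.
move=> ha hb; rewrite (lmulE (k := 1) ha hb); last by lia.
by rewrite /csum big_ord1 /= addr0; congr (_ * b _); lia.
Qed.

Definition lone : laurent K := fun n => (n == 0)%:R.

Lemma lone_vanish : vanish_below lone 0.
Proof. by move=> n hn; rewrite /lone; case: eqP => // e; move: hn; rewrite e ltxx. Qed.

Lemma lmul0r a n : lmul (lzero K) a n = 0.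
Proof. by apply: big1 => j _; rewrite /lzero mul0r. Qed.

Lemma lmulr0 a n : lmul a (lzero K) n = 0.
Proof. by apply: big1 => j _; rewrite /lzero mulr0. Qed.

Lemma lmulr1 a n : is_laurent a -> lmul a lone n = a n.
Proof.
move=> la; set A := Num.min (lbound a) n.
have hA : vanish_below a A by apply: (vanish_below_le (lbound_vanish la)); rewrite ge_min lexx.
rewrite (lmulE (k := (absz (n - A)).+1) hA lone_vanish); last by lia.
rewrite /csum big_ord_recr /= big1 ?add0r.
  rewrite /lone; have -> : n - A - (absz (n - A))%:Z = 0 by lia.
  by rewrite eqxx mulr1; congr a; lia.
move=> j _; rewrite /lone /= (_ : (_ == _) = false) ?mulr0 //.
by apply/eqP; have := ltn_ord j; lia.
Qed.

Lemma lmul1r a n : is_laurent a -> lmul lone a n = a n.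
Proof.
move=> la; set B := Num.min (lbound a) n.
have hB : vanish_below a B by apply: (vanish_below_le (lbound_vanish la)); rewrite ge_min lexx.
rewrite (lmulE (k := (absz (n - B)).+1) lone_vanish hB); last by lia.
rewrite /csum big_ord_recl /= big1 ?addr0; first by rewrite /lone eqxx mul1r.
by move=> j _; rewrite /lone /= mulr0n mul0r.
Qed.

Lemma lmulrB a b c n : is_laurent a -> is_laurent b -> is_laurent c ->
  lmul a (fun m => b m - c m) n = lmul a b n - lmul a c n.
Proof.
move=> la lb lc; have ha := lbound_vanish la.
set B := Num.min (lbound b) (lbound c).
have hb : vanish_below b B by apply: (vanish_below_le (lbound_vanish lb)); rewrite ge_min lexx.
have hc : vanish_below c B.
  by apply: (vanish_below_le (lbound_vanish lc)); rewrite ge_min lexx orbT.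
have hbc : vanish_below (fun m => b m - c m) B by move=> m hm; rewrite hb // hc // subr0.
set k := (absz (n - B - lbound a)%R).+1.
rewrite (lmulE (k := k) ha hbc) 1?(lmulE (k := k) ha hb) 1?(lmulE (k := k) ha hc); try lia.
by rewrite /csum -sumrB; apply: eq_bigr => j _; rewrite mulrBr.
Qed.

Lemma laurent_lmul a b : is_laurent a -> is_laurent b -> is_laurent (lmul a b).
Proof. by move=> [A hA] [B hB]; exists (A + B); exact: lmul_vanish. Qed.

Lemma laurent_opp a : is_laurent a -> is_laurent (fun n => - a n).
Proof. by move=> [A hA]; exists A => n hn; rewrite hA ?oppr0. Qed.

Lemma laurent_sub a b : is_laurent a -> is_laurent b -> is_laurent (fun n => a n - b n).
Proof. by move=> [A hA] [B hB]; exists (Num.min A B) => n hn; rewrite hA ?hB ?subr0 //; lia. Qed.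

Lemma laurent_sum k (F : 'I_k -> laurent K) : (forall i, is_laurent (F i)) ->
  is_laurent (fun n => \sum_(i < k) F i n).
Proof.
elim: k F => [|k IH] F h; first by exists 0 => n _; rewrite big_ord0.
have [N1 h1] := IH (fun i => F (widen_ord (leqnSn _) i)) (fun i => h _).
have [N2 h2] := h ord_max.
exists (Num.min N1 N2) => n hn; rewrite big_ord_recr /= h2 ?addr0; last by lia.
by apply: h1; lia.
Qed.

Definition has_order a m := vanish_below a m /\ a m != 0.

Lemma laurent_eq0_or_order a : is_laurent a -> (forall n, a n = 0) \/ exists m, has_order a m.
Proof.
move=> la; have hN := lbound_vanish la; set N := lbound a in hN.
case: (classic (exists n, a n != 0)) => [[n0 hn0]|hno]; last first.
  left=> n; apply/eqP/negPn/negP => h; apply: hno; by exists n.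
right; have ex : exists k : nat, a (N + k%:Z) != 0.
  exists (absz (n0 - N)); have -> // : N + (absz (n0 - N))%:Z = n0.
  by case: (lerP N n0) => h; [lia | move: hn0; rewrite hN // eqxx].
case: (ex_minnP ex) => k hk hmin; exists (N + k%:Z); split => // n hn.
case: (ltrP n N) => h; first exact: hN.
apply/eqP/negPn/negP => hne; have := hmin (absz (n - N)).
have -> : N + (absz (n - N))%:Z = n by lia.
by move=> /(_ hne); lia.
Qed.

Lemma has_orderM a b A B : has_order a A -> has_order b B -> has_order (lmul a b) (A + B).
Proof.
move=> [ha ha0] [hb hb0]; split; first exact: lmul_vanish.
by rewrite lmul_lead // mulf_neq0.
Qed.

Lemma has_order_ext a b m : (forall n, a n = b n) -> has_order b m -> has_order a m.
Proof. by move=> h [h1 h2]; split; [move=> n hn; rewrite h h1 | rewrite h]. Qed.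

Lemma lmulI0 D x : (exists v, has_order D v) -> is_laurent x ->
  (forall n, lmul D x n = 0) -> forall n, x n = 0.
Proof.
move=> [v hv] lx h; case: (laurent_eq0_or_order lx) => // [[m hm]].
by have [_] := has_orderM hv hm; rewrite h eqxx.
Qed.

Lemma lmul_unit_vanish D x m : vanish_below D 0 -> D 0 != 0 -> is_laurent x ->
  vanish_below (lmul D x) m -> vanish_below x m.
Proof.
move=> hD hD0 lx hm; case: (laurent_eq0_or_order lx) => [h0 n _|[m0 hm0]]; first exact: h0.
case: (lerP m m0) => l; first exact: (vanish_below_le hm0.1).
by have [_] := has_orderM (conj hD hD0) hm0; rewrite add0r hm ?eqxx.
Qed.

End LaurentSeries.

Section StrongRecursion.
Variables (T : Type) (x0 : T) (F : nat -> (nat -> T) -> T).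

Fixpoint srec_hist k : seq T :=
  if k is k'.+1 then rcons (srec_hist k') (F k' (nth x0 (srec_hist k'))) else [::].

Definition srec k := nth x0 (srec_hist k.+1) k.

Lemma size_srec_hist k : size (srec_hist k) = k.
Proof. by elim: k => //= k IH; rewrite size_rcons IH. Qed.

Lemma nth_srec_hist k d i : (i < k)%N -> nth x0 (srec_hist (k + d)) i = nth x0 (srec_hist k) i.
Proof.
move=> lt; elim: d => [|d IH]; first by rewrite addn0.
by rewrite addnS /= nth_rcons size_srec_hist (leq_trans lt (leq_addr _ _)).
Qed.

Lemma srecE : (forall k f g, (forall i, (i < k)%N -> f i = g i) -> F k f = F k g) ->
  forall k, srec k = F k srec.
Proof.
move=> hF k; rewrite /srec /= nth_rcons size_srec_hist ltnn eqxx.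
by apply: hF => i lt; rewrite -(subnKC lt) nth_srec_hist.
Qed.

End StrongRecursion.

Section LaurentDivision.
Variable K : fieldType.
Implicit Types a D : laurent K.

(* Long division: the coefficients of the quotient are found one by one, starting from the
   order [v] of [D]. *)
Lemma ldiv_exists D a v : has_order D v -> is_laurent a ->
  exists x, is_laurent x /\ forall n, lmul D x n = a n.
Proof.
move=> [hD hD0] [A hA].
pose F (k : nat) (f : nat -> K) :=
  (a (A + k%:Z) - \sum_(j < k) D (v + j.+1%:Z) * f (k - j.+1)%N) / D v.
pose X := srec 0 F.
have XE : forall k, X k = F k X.
  apply: srecE => k f g h; rewrite /F; congr ((_ - _) / _).
  by apply: eq_bigr => j _; rewrite h //; have := ltn_ord j; lia.
pose x n := if A - v <= n then X (absz (n - (A - v))%R) else 0.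
have hx : vanish_below x (A - v) by move=> n hn; rewrite /x leNgt hn.
exists x; split; first by exists (A - v).
move=> n; case: (ltrP n A) => hn.
  by rewrite hA //; apply: (lmul_vanish hD hx); lia.
set k := absz (n - A)%R.
have xj (j : nat) : (j <= k)%N -> x (n - v - j%:Z) = X (k - j)%N.
  by move=> hj; rewrite /x ifT; [congr X | ]; lia.
rewrite (lmulE (k := k.+1) hD hx); last by lia.
rewrite /csum big_ord_recl /= (xj 0%N) // subn0.
rewrite (eq_bigr (fun j : 'I_k => D (v + j.+1%:Z) * X (k - j.+1)%N)); last first.
  by move=> j _; rewrite /bump /= add1n xj.
by rewrite XE /F addr0 mulrC divfK // subrK; congr a; lia.
Qed.

Definition ldiv D a : laurent K :=
  epsilon (inhabits (lzero K)) (fun x => is_laurent x /\ forall n, lmul D x n = a n).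

Lemma ldivP D a v : has_order D v -> is_laurent a ->
  is_laurent (ldiv D a) /\ forall n, lmul D (ldiv D a) n = a n.
Proof. by move=> hD ha; exact: (epsilon_spec _ _ (ldiv_exists hD ha)). Qed.

End LaurentDivision.

Section PolyExpansion.
Variable K : fieldType.
Implicit Types p q : {poly K}.

Lemma polyAt_vanish p z : vanish_below (polyAt p z) 0.
Proof. by case=> [m|m] //= hn; lia. Qed.

Lemma polyAt_laurent p z : is_laurent (polyAt p z).
Proof. exact: vanish_below_laurent (polyAt_vanish p z). Qed.

Lemma polyAt_coef0 p z : polyAt p z 0 = p.[z].
Proof. by rewrite /polyAt /= -horner_coef0 horner_comp !hornerE. Qed.

Lemma polyAt0 z n : polyAt (0 : {poly K}) z n = 0.
Proof. by case: n => // m; rewrite /polyAt comp_poly0 coef0. Qed.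

Lemma polyAt_order p z : p != 0 -> exists v, has_order (polyAt p z) v.
Proof.
move=> p0; case: (laurent_eq0_or_order (polyAt_laurent p z)) => [h0|//].
suff : p \Po ('X + z%:P) = 0.
  move/(congr1 (fun q => q \Po ('X - z%:P))); rewrite comp_polyXaddC_K comp_poly0.
  by move/eqP: p0.
by apply/polyP => i; rewrite coef0; have := h0 (Posz i).
Qed.

Lemma polyAtM p q z n : polyAt (p * q) z n = lmul (polyAt p z) (polyAt q z) n.
Proof.
case: n => [m|m]; last first.
  by symmetry; apply: (lmul_vanish (polyAt_vanish p z) (polyAt_vanish q z)).
rewrite (lmulE (k := m.+1) (polyAt_vanish p z) (polyAt_vanish q z)); last by lia.
rewrite /csum /polyAt comp_polyM coefM; apply: eq_bigr => j _.
by rewrite add0r /=; have -> : Posz m - 0 - Posz j = Posz (m - j)%N by have := ltn_ord j; lia.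
Qed.

End PolyExpansion.

Lemma xle_trans a b c : xle a b -> xle b c -> xle a c.
Proof. by case: a => [|x|]; case: b => [|y|]; case: c => [|z|] //=; apply: le_trans. Qed.

Lemma is_glb_exists P : exists l, is_glb P l.
Proof.
case: (classic (P NInf)) => hN.
  by exists NInf; split => [v _|m hm] //; exact: hm _ hN.
case: (classic (exists n, P (Fin n))) => [[n0 hn0]|hF]; last first.
  exists PInf; split => [v hv|m _]; last by case: m.
  by case: v hv => // n hn; exfalso; apply: hF; exists n.
case: (classic (exists B, forall n, P (Fin n) -> B <= n)) => [[B hB]|hU]; last first.
  exists NInf; split => [v _|m hm] //.
  case: m hm => // [x|] hm; last by have := hm _ hn0.
  by exfalso; apply: hU; exists x => n hn; exact: (hm _ hn).
pose pk k := if excluded_middle_informative (P (Fin (B + k%:Z))) then true else false.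
have pkP k : reflect (P (Fin (B + k%:Z))) (pk k).
  by rewrite /pk; case: excluded_middle_informative; constructor.
have ex : exists k, pk k.
  exists (absz (n0 - B)); apply/pkP.
  by have -> : B + (absz (n0 - B)%R)%:Z = n0 by have := hB _ hn0; lia.
case: (ex_minnP ex) => k /pkP Pk hmin.
exists (Fin (B + k%:Z)); split => [v hv|m hm]; last exact: hm.
case: v hv => // n hn /=; have := hB _ hn => hBn.
have : pk (absz (n - B)) by apply/pkP; have -> : B + (absz (n - B)%R)%:Z = n by lia.
by move/hmin; lia.
Qed.

Lemma xinfP P : is_glb P (xinf P).
Proof. exact: (epsilon_spec _ _ (is_glb_exists P)). Qed.

Definition xopp a := match a with NInf => PInf | PInf => NInf | Fin n => Fin (- n) end.

Lemma xoppK a : xopp (xopp a) = a.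
Proof. by case: a => //= n; rewrite opprK. Qed.

Lemma xle_opp a b : xle (xopp a) (xopp b) <-> xle b a.
Proof. by case: a; case: b => //= x y; rewrite lerN2. Qed.

Lemma is_lub_exists P : exists l, is_lub P l.
Proof.
have [l [h1 h2]] := is_glb_exists (fun v => P (xopp v)).
exists (xopp l); split.
  by move=> v hv; apply/xle_opp; rewrite xoppK; apply: h1; rewrite xoppK.
move=> m hm; rewrite -(xoppK m); apply/xle_opp; apply: h2 => v hv.
by rewrite -(xoppK v); apply/xle_opp; apply: hm.
Qed.

Lemma xsupP P : is_lub P (xsup P).
Proof. exact: (epsilon_spec _ _ (is_lub_exists P)). Qed.

Lemma xsub_ge0 x l : xle l x -> x <> NInf -> xle (Fin 0) (xsub x l).
Proof. by case: x => [|x|] //; case: l => [|y|] //= h _; rewrite subr_ge0. Qed.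

Section Valuation.
Variable K : fieldType.
Implicit Types a : laurent K.

Lemma nu_le a n : a n != 0 -> xle (nu a) (Fin n).
Proof. by move=> h; apply: (xinfP _).1; exists n. Qed.

Lemma nu_ge a m : vanish_below a m -> xle (Fin m) (nu a).
Proof.
move=> h; apply: (xinfP _).2 => v [n [hn ->]] /=.
by case: (ltrP n m) => // l; move: hn; rewrite h ?eqxx.
Qed.

End Valuation.

Lemma frac_numden (R : idomainType) (x : {fraction R}) :
  exists p d : R, d != 0 /\ x = tofrac p / tofrac d.
Proof.
exists (\n_(repr x)), (\d_(repr x)); split; first exact: denom_ratioP.
rewrite -[x in LHS]reprK; set y := repr x.
rewrite /tofrac -lock -[X in _ = _ * X]FracField.pi_inv.
change (\pi_({fraction R})%qT y = FracField.mul (\pi_({fraction R})%qT (Ratio \n_y 1))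
  (\pi_({fraction R})%qT (FracField.invf (Ratio \d_y 1)))).
rewrite -FracField.pi_mul -{1}(Ratio_numden y); congr (\pi_({fraction R}) _)%qT.
by rewrite /FracField.mulf /FracField.invf /= !numden_Ratio ?oner_neq0 ?denom_ratioP // mulr1 mul1r.
Qed.

Lemma intr_inj_pchar0 (R : fieldType) : [pchar R] =i pred0 ->
  injective (fun k : int => k%:~R : R).
Proof.
move=> /(pcharf0P R) ch0 p q /eqP; rewrite -subr_eq0 -intrB => pq0.
apply/eqP; rewrite -subr_eq0; move: (p - q) pq0 => [] n.
  by rewrite -pmulrn ch0.
by rewrite NegzE mulrNz oppr_eq0 ch0.
Qed.

Lemma addr_intr_nat (K : nzRingType) (z : K) (p : int) (i : nat) :
  z + p%:~R + i%:R = z + (p + i%:Z)%:~R.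
Proof. by rewrite intrD -pmulrn addrA. Qed.

Lemma subr_nat_intr (K : nzRingType) (z : K) (m : nat) : z - m%:R = z + (- (m%:Z))%:~R.
Proof. by rewrite intrN -pmulrn. Qed.

Section RationalExpansion.
Variables (C : fieldType) (K : closedFieldType) (iota : {rmorphism C -> K}).
Local Notation RF := {fraction {poly C}}.

Lemma ratAtP (f : RF) z : is_laurent (ratAt iota f z) /\
  exists p d : {poly C}, d != 0 /\ f = tofrac p / tofrac d /\
    lmul (polyAt (map_poly iota d) z) (ratAt iota f z) = polyAt (map_poly iota p) z.
Proof.
have [p [d [d0 ->]]] := frac_numden f.
have [v hv] : exists v, has_order (polyAt (map_poly iota d) z) v.
  by apply: polyAt_order; rewrite map_poly_eq0.
have [x [lx hx]] := ldiv_exists hv (polyAt_laurent (map_poly iota p) z).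
apply: (epsilon_spec _ (fun e => is_laurent e /\ exists p0 d0 : {poly C}, d0 != 0 /\
  tofrac p / tofrac d = tofrac p0 / tofrac d0 /\
  lmul (polyAt (map_poly iota d0) z) e = polyAt (map_poly iota p0) z)).
by exists x; split => //; exists p, d; do 2!split => //; exact: functional_extensionality hx.
Qed.

Lemma ratAt1 z : ratAt iota 1 z = lone K.
Proof.
have [le [p [d [d0 [h1 h2]]]]] := ratAtP 1 z.
have dF : tofrac d != 0 by rewrite tofrac_eq0.
have pd : p = d.
  by apply/eqP; rewrite -tofrac_eq; apply/eqP; rewrite -[tofrac p](divfK dF) -h1 mul1r.
subst p; have dn : map_poly iota d != 0 by rewrite map_poly_eq0.
have l1 : is_laurent (lone K) by exists 0; exact: lone_vanish.
apply: functional_extensionality => n; apply/eqP; rewrite -subr_eq0; apply/eqP; move: n.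
apply: (lmulI0 (polyAt_order z dn)); first exact: laurent_sub.
by move=> m; rewrite lmulrB // ?h2 ?lmulr1 ?subrr //; exact: polyAt_laurent.
Qed.

Lemma ratAt0 z : ratAt iota 0 z = lzero K.
Proof.
have [le [p [d [d0 [h1 h2]]]]] := ratAtP 0 z.
have dF : tofrac d != 0 by rewrite tofrac_eq0.
have p0 : p = 0.
  by apply/eqP; rewrite -tofrac_eq0; apply/eqP; rewrite -[tofrac p](divfK dF) -h1 mul0r.
subst p; have dn : map_poly iota d != 0 by rewrite map_poly_eq0.
apply: functional_extensionality; apply: (lmulI0 (polyAt_order z dn)) => // m.
by rewrite h2 rmorph0 polyAt0.
Qed.

(* Write [g = p'/d'] in lowest terms; if [d'] vanished at [beta], the order of [d] at
   [beta] would exceed that of [p], contradicting that [p = d g] with [g] a power series. *)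
Lemma not_local_neg_coef beta (g : RF) :
  ~ in_local iota beta g -> exists n, n < 0 /\ ratAt iota g beta n != 0.
Proof.
move=> hnl; apply: NNPP => hno.
have hv0 : vanish_below (ratAt iota g beta) 0.
  by move=> n hn; apply: NNPP => hne; apply: hno; exists n; split => //; exact/eqP.
apply: hnl; have [le [p [d [d0 [hg hD]]]]] := ratAtP g beta.
case: (eqVneq p 0) => [p0|pn0].
  exists 0, 1; split; first by rewrite rmorph1 hornerC oner_neq0.
  by rewrite hg p0 !tofrac0 !mul0r.
set g0 := gcdp p d.
have g0n : g0 != 0 by rewrite gcdp_eq0 negb_and d0 orbT.
set p' := p %/ g0; set d' := d %/ g0.
have hp : p = p' * g0 by rewrite divpK ?dvdp_gcdl.
have hd : d = d' * g0 by rewrite divpK ?dvdp_gcdr.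
have cop : coprimep p' d' by apply: coprimep_div_gcd; rewrite d0 orbT.
have d'n : d' != 0 by apply: contraNneq d0 => e; rewrite hd e mul0r.
case: (eqVneq (map_poly iota d').[beta] 0) => hd'0; last first.
  exists p', d'; split => //.
  by rewrite hg hp hd !tofracM invfM mulrACA mulfV ?mulr1 // tofrac_eq0.
exfalso.
have hp'0 : (map_poly iota p').[beta] != 0.
  apply: (coprimep_root (p := map_poly iota d')); last exact/eqP.
  by rewrite coprimep_map coprimep_sym.
have [a ha] : exists a, has_order (polyAt (map_poly iota d') beta) a.
  by apply: polyAt_order; rewrite map_poly_eq0.
have [c hc] : exists c, has_order (polyAt (map_poly iota g0) beta) c.
  by apply: polyAt_order; rewrite map_poly_eq0.
have hP' : has_order (polyAt (map_poly iota p') beta) 0.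
  by split; [exact: polyAt_vanish | rewrite polyAt_coef0].
have a0 : 0 < a.
  case: (ltgtP a 0) => [alt|//|ae]; move: ha.2.
    by rewrite polyAt_vanish ?eqxx.
  by rewrite ae polyAt_coef0 hd'0 eqxx.
have hPl : has_order (polyAt (map_poly iota p) beta) (0 + c).
  by apply: (has_order_ext _ (has_orderM hP' hc)) => n; rewrite hp rmorphM polyAtM.
have hDl : has_order (polyAt (map_poly iota d) beta) (a + c).
  by apply: (has_order_ext _ (has_orderM ha hc)) => n; rewrite hd rmorphM polyAtM.
have := lmul_vanish hDl.1 hv0; rewrite hD addr0 => hvP.
by move: hPl.2; rewrite add0r hvP ?eqxx //; lia.
Qed.

End RationalExpansion.

Section Recurrence.
Variables (C : fieldType) (K : closedFieldType) (iota : {rmorphism C -> K}).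
Variables (r : nat) (ell : 'I_r.+1 -> {poly C}).
Local Notation E i z := (polyAt (map_poly iota (ell i)) z).

Lemma Sol_laurent beta b p : Sol iota ell beta b -> is_laurent (b (beta + p%:~R)).
Proof. by move=> [h _]; apply: h; exists p. Qed.

Lemma Sol_recurrence beta b p n : Sol iota ell beta b ->
  \sum_(i < r.+1) lmul (E i (beta + p%:~R)) (b (beta + (p + (i : nat)%:Z)%:~R)) n = 0.
Proof.
move=> [_ h]; rewrite -[RHS](congr1 (fun f => f n) (h _ (ex_intro _ p erefl))).
by apply: eq_bigr => i _; rewrite addr_intr_nat.
Qed.

Lemma actA_Spowers beta b (j : 'I_r) : Sol iota ell beta b ->
  actA iota (Spowers C j) b beta = b (beta + (j : nat)%:R).
Proof.
move=> hs; apply: functional_extensionality => n.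
rewrite /actA (bigD1 j) //= big1 ?addr0.
  rewrite /Spowers eqxx ratAt1 lmul1r //.
  by have := Sol_laurent j%:Z hs; rewrite -pmulrn.
by move=> i hij; rewrite /Spowers (negbTE hij) ratAt0; exact: lmul0r.
Qed.

(* Where [ell_r] does not vanish, [ell_r(z+q)] is a unit power series, so the recurrence
   determines [b(z+r)] from [b(z)], ..., [b(z+r-1)] without lowering the order. *)
Lemma Sol_vanish_step beta b p m : Sol iota ell beta b ->
  (map_poly iota (ell ord_max)).[beta + p%:~R] != 0 ->
  (forall i : nat, (i < r)%N -> vanish_below (b (beta + (p + i%:Z)%:~R)) m) ->
  vanish_below (b (beta + (p + r%:Z)%:~R)) m.
Proof.
move=> hs hr hw.
apply: (lmul_unit_vanish (D := E ord_max (beta + p%:~R))) (polyAt_vanish _ _) _ _ _.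
- by rewrite polyAt_coef0.
- exact: Sol_laurent.
move=> n hn; have := Sol_recurrence p n hs; rewrite big_ord_recr /= big1 ?add0r //.
move=> i _; apply: (lmul_vanish (polyAt_vanish _ _) (hw i (ltn_ord i))); by rewrite add0r.
Qed.

Lemma Sol_vanish_steps beta b p m t : Sol iota ell beta b ->
  (forall s : nat, (s < t)%N -> (map_poly iota (ell ord_max)).[beta + (p + s%:Z)%:~R] != 0) ->
  (forall i : nat, (i < r)%N -> vanish_below (b (beta + (p + i%:Z)%:~R)) m) ->
  forall i : nat, (i < r + t)%N -> vanish_below (b (beta + (p + i%:Z)%:~R)) m.
Proof.
move=> hs hr hw; elim: t hr => [|t IH] hr i hi; first by apply: hw; rewrite addn0 in hi.
case: (ltnP i (r + t)) => h; first by apply: IH => // s hs'; apply: hr; lia.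
have := Sol_vanish_step (p := p + t%:Z) (m := m) hs (hr t (ltnSn t)).
rewrite (_ : p + t%:Z + r%:Z = p + i%:Z); last by lia.
apply => j hj; rewrite (_ : p + t%:Z + j%:Z = p + (t + j)%N%:Z); last by lia.
by apply: IH; [move=> s hs'; apply: hr | ]; lia.
Qed.

End Recurrence.

Section UnitSolution.
Variables (C : fieldType) (K : closedFieldType) (iota : {rmorphism C -> K}).
Hypothesis charC0 : [pchar C] =i pred0.
Variables (r : nat) (ell : 'I_r.+1 -> {poly C}).
Hypotheses (ell0_neq0 : ell ord0 != 0) (ellr_neq0 : ell ord_max != 0).
Variables (beta : K) (i0 : 'I_r).
Local Notation E i z := (polyAt (map_poly iota (ell i)) z).

Lemma E0_order z : exists v, has_order (E ord0 z) v.
Proof. by apply: polyAt_order; rewrite map_poly_eq0. Qed.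

Lemma Er_order z : exists v, has_order (E ord_max z) v.
Proof. by apply: polyAt_order; rewrite map_poly_eq0. Qed.

Definition unit_init (k : nat) : laurent K := if k == i0 :> nat then lone K else lzero K.

(* [fwd k] is the value at [beta + k], obtained by solving the recurrence for [b(z + r)]. *)
Definition fwd_step (k : nat) (g : nat -> laurent K) : laurent K :=
  if (k < r)%N then unit_init k else
  ldiv (E ord_max (beta + ((k - r)%N%:Z)%:~R))
    (fun n => - \sum_(i < r) lmul (E (widen_ord (leqnSn r) i) (beta + ((k - r)%N%:Z)%:~R))
                  (g (k - r + i)%N) n).
Definition fwd := srec (lzero K) fwd_step.

(* [glue g q] is the value at [beta + q], with [g m] standing for the value at [beta - m]. *)
Definition glue (g : nat -> laurent K) (q : int) :=
  match q with Posz m => fwd m | Negz m => g m.+1 end.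

(* [bwd k] is the value at [beta - k], obtained by solving the recurrence for [b(z)]. *)
Definition bwd_step (k : nat) (g : nat -> laurent K) : laurent K :=
  ldiv (E ord0 (beta + (- k%:Z)%:~R))
    (fun n => - \sum_(i < r) lmul (E (lift ord0 i) (beta + (- k%:Z)%:~R))
                  (glue g (- k%:Z + i.+1%:Z)) n).
Definition bwd := srec (lzero K) bwd_step.

(* Well defined on [beta + Z] only because the characteristic is 0. *)
Definition coset_index (z : K) : int :=
  epsilon (inhabits 0) (fun p : int => z = beta + p%:~R).

Definition unit_sol (z : K) := glue bwd (coset_index z).

Lemma coset_indexE p : coset_index (beta + p%:~R) = p.
Proof.
have := epsilon_spec (inhabits 0) (fun q : int => beta + p%:~R = beta + q%:~R) (ex_intro _ p erefl).
have charK : [pchar K] =i pred0 by move=> q; rewrite (fmorph_pchar iota) charC0.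
by rewrite -/(coset_index _) => /addrI /(intr_inj_pchar0 charK).
Qed.

Lemma unit_solE p : unit_sol (beta + p%:~R) = glue bwd p.
Proof. by rewrite /unit_sol coset_indexE. Qed.

Lemma fwdE k : fwd k = fwd_step k fwd.
Proof.
apply: srecE => {}k f g h; rewrite /fwd_step; case: ifP => // hk.
congr ldiv; apply: functional_extensionality => n; congr (- _).
by apply: eq_bigr => i _; rewrite h //; have := ltn_ord i; lia.
Qed.

Lemma bwdE k : bwd k = bwd_step k bwd.
Proof.
apply: srecE => {}k f g h; rewrite /bwd_step.
congr ldiv; apply: functional_extensionality => n; congr (- _).
apply: eq_bigr => i _; case e: (- k%:Z + i.+1%:Z) => [m|m] //=.
by rewrite h //; move: e; rewrite NegzE; lia.
Qed.

Lemma fwd_init k : (k < r)%N -> fwd k = unit_init k.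
Proof. by move=> hk; rewrite fwdE /fwd_step hk. Qed.

Lemma unit_init_vanish k : vanish_below (unit_init k) 0.
Proof. by rewrite /unit_init; case: eqP => _; [exact: lone_vanish | by []]. Qed.

Lemma fwd_laurent k : is_laurent (fwd k).
Proof.
elim/ltn_ind: k => k IH; rewrite fwdE /fwd_step; case: ifP => hk.
  exact: vanish_below_laurent (unit_init_vanish k).
have [v hv] := Er_order (beta + ((k - r)%N%:Z)%:~R).
apply: (ldivP hv _).1; apply/laurent_opp/laurent_sum => i.
by apply: laurent_lmul; [exact: polyAt_laurent | apply: IH; have := ltn_ord i; lia].
Qed.

Lemma bwd_laurent k : is_laurent (bwd k).
Proof.
elim/ltn_ind: k => k IH; rewrite bwdE /bwd_step.
have [v hv] := E0_order (beta + (- k%:Z)%:~R).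
apply: (ldivP hv _).1; apply/laurent_opp/laurent_sum => i.
apply: laurent_lmul; first exact: polyAt_laurent.
case e: (- k%:Z + i.+1%:Z) => [m|m] /=; first exact: fwd_laurent.
by apply: IH; move: e; rewrite NegzE; lia.
Qed.

Lemma glue_laurent q : is_laurent (glue bwd q).
Proof. by case: q => m; [exact: fwd_laurent | exact: bwd_laurent]. Qed.

Lemma unit_sol_Sol : Sol iota ell beta unit_sol.
Proof.
split; first by move=> z [p ->]; rewrite unit_solE; exact: glue_laurent.
move=> z [p ->]; apply: functional_extensionality => n; rewrite /lzero.
under eq_bigr do rewrite addr_intr_nat unit_solE.
case: p => [k|k].
  rewrite big_ord_recr /= fwdE /fwd_step ifN -?leqNgt ?leq_addl // addnK.
  have [v hv] := Er_order (beta + (k%:Z)%:~R).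
  rewrite (ldivP hv _).2 /= ?addrN //.
  apply/laurent_opp/laurent_sum => i.
  by apply: laurent_lmul; [exact: polyAt_laurent | exact: fwd_laurent].
rewrite big_ord_recl /= subn0 bwdE /bwd_step.
have [v hv] := E0_order (beta + (Negz k)%:~R).
rewrite (ldivP hv _).2 /=; first by rewrite addNr.
apply/laurent_opp/laurent_sum => i.
by apply: laurent_lmul; [exact: polyAt_laurent | exact: glue_laurent].
Qed.

Lemma unit_sol_init (i : 'I_r) : unit_sol (beta + (i : nat)%:R) = unit_init i.
Proof. by rewrite pmulrn unit_solE /= fwd_init. Qed.

Lemma actA_unit_sol f : actA iota f unit_sol beta = ratAt iota (f i0) beta.
Proof.
apply: functional_extensionality => n.
rewrite /actA (bigD1 i0) //= big1 ?addr0.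
  by rewrite unit_sol_init /unit_init eqxx lmulr1 //; exact: (ratAtP _ _ _).1.
by move=> i hij; rewrite unit_sol_init /unit_init ifN ?lmulr0.
Qed.

(* Where [ell_0] does not vanish, [ell_0(z+q)] is a unit power series, so the backward
   recurrence keeps the values power series, starting from the unit vectors. *)
Lemma bwd_vanish :
  (forall m : nat, (0 < m)%N -> (map_poly iota (ell ord0)).[beta - m%:R] != 0) ->
  forall k, (0 < k)%N -> vanish_below (bwd k) 0.
Proof.
move=> ell0_unit; elim/ltn_ind => k IH hk; rewrite bwdE /bwd_step.
have [v hv] := E0_order (beta + (- k%:Z)%:~R).
have [hl hd] := ldivP hv (laurent_opp (laurent_sum (fun i => laurent_lmul
  (polyAt_laurent (map_poly iota (ell (lift ord0 i))) (beta + (- k%:Z)%:~R)) (glue_laurent (- k%:Z + i.+1%:Z))))).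
apply: (lmul_unit_vanish (D := E ord0 (beta + (- k%:Z)%:~R))) (polyAt_vanish _ _) _ hl _.
  by rewrite polyAt_coef0 -subr_nat_intr ell0_unit.
move=> n hn; rewrite hd /= big1 ?oppr0 // => i _.
apply: (lmul_vanish (B := 0) (polyAt_vanish _ _)); last by lia.
case e: (- k%:Z + i.+1%:Z) => [m|m] /=.
  by rewrite fwd_init; [exact: unit_init_vanish | have := ltn_ord i; move: e; lia].
by apply: IH; move: e; rewrite NegzE; lia.
Qed.

Lemma unit_sol_vanish_left :
  (forall m : nat, (0 < m)%N -> (map_poly iota (ell ord0)).[beta - m%:R] != 0) ->
  forall m : nat, vanish_below (unit_sol (beta - m%:R)) 0.
Proof.
move=> ell0_unit [|k]; rewrite subr_nat_intr unit_solE.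
  change (vanish_below (fwd 0) 0); rewrite fwd_init; first exact: unit_init_vanish.
  exact: leq_ltn_trans (leq0n i0) (ltn_ord i0).
by change (vanish_below (bwd k.+1) 0); exact: bwd_vanish.
Qed.

End UnitSolution.

Lemma lincomb_Spowers (C : fieldType) (r : nat) (c : 'I_r -> {fraction {poly C}}) :
  lincomb c (@Spowers C r) = c.
Proof.
apply: functional_extensionality => i; rewrite /lincomb /Spowers (bigD1 i) //= eqxx mulr1.
by rewrite big1 ?addr0 // => j hj; rewrite eq_sym (negbTE hj) mulr0.
Qed.

Section LocalIntegralBasis.
Variables (C : fieldType) (K : closedFieldType) (iota : {rmorphism C -> K}).
Hypothesis charC0 : [pchar C] =i pred0.
Variables (r : nat) (ell : 'I_r.+1 -> {poly C}).
Hypotheses (ell0_neq0 : ell ord0 != 0) (ellr_neq0 : ell ord_max != 0).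
Variable beta : K.
Hypothesis no_roots_left : forall m : nat, (0 < m)%N ->
  ~~ root (map_poly iota (ell ord0 * ell ord_max)) (beta - m%:R).

Lemma ell_ends_unit_left m : (0 < m)%N ->
  (map_poly iota (ell ord0)).[beta - m%:R] != 0 /\
  (map_poly iota (ell ord_max)).[beta - m%:R] != 0.
Proof.
by move/no_roots_left; rewrite /root rmorphM hornerM mulf_eq0 negb_or => /andP.
Qed.

(* If [b] vanished below order [n + 1] at all points [beta - m], [m >= N], then running the
   recurrence forward from [r] consecutive such points would make [b(beta + j)] vanish too. *)
Lemma Sol_coef_far_left b (j N : nat) n : Sol iota ell beta b -> (j < r)%N ->
  b (beta + j%:R) n != 0 ->
  exists2 m : nat, (N <= m)%N & exists2 n', n' <= n & b (beta - m%:R) n' != 0.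
Proof.
move=> hs hj hn; set p := - ((N + r)%N%:Z); apply: NNPP => hno.
have hw (i : nat) : (i < r)%N -> vanish_below (b (beta + (p + i%:Z)%:~R)) (n + 1).
  move=> hi n' hn'; apply: NNPP => hne; apply: hno; exists (N + r - i)%N; first lia.
  exists n'; first lia.
  rewrite subr_nat_intr (_ : - ((N + r - i)%N%:Z) = p + i%:Z); last by rewrite /p; lia.
  exact/eqP.
have := Sol_vanish_steps (t := (N + j).+1) hs _ hw (i := (N + r + j)%N).
rewrite (_ : p + (N + r + j)%N%:Z = j%:Z) -?pmulrn; last by rewrite /p; lia.
move=> h; move/eqP: hn; apply; apply: h; try lia.
move=> s hs'; have /ell_ends_unit_left[_] : (0 < N + r - s)%N by lia.
by rewrite subr_nat_intr (_ : - ((N + r - s)%N%:Z) = p + s%:Z) //; rewrite /p; lia.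
Qed.

Lemma Spowers_integral (j : 'I_r) : integral_at iota ell beta (Spowers C j).
Proof.
apply: (xinfP _).2 => v [b [hs ->]]; rewrite (actA_Spowers _ hs).
set c := b (beta + (j : nat)%:R).
have [B hB] : is_laurent c by have := Sol_laurent j%:Z hs; rewrite -pmulrn.
apply: xsub_ge0; last by have := nu_ge hB; case: (nu c).
apply: (xsupP _).2 => y [N ->]; apply: (xinfP _).2 => w [n [hn ->]].
have [m hNm [n' hn' hb']] := Sol_coef_far_left N hs (ltn_ord j) hn.
apply: xle_trans; first by apply: (xinfP _).1; exists m; split; [exact: hNm | reflexivity].
by apply: xle_trans (nu_le hb') _.
Qed.

(* Test [f] against the solution with unit initial values at [i]: its values left of [beta]
   are power series, so integrality forces [f_i(beta+q)] to be one as well. *)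
Lemma integral_at_local f : integral_at iota ell beta f ->
  forall i, in_local iota beta (f i).
Proof.
move=> f_int i; apply: NNPP => /not_local_neg_coef [n [n_lt0 fi_n]].
set b := unit_sol iota ell beta i.
have hv : xle (Defs.val iota ell beta f)
    (xsub (nu (actA iota f b beta)) (xliminf (fun m : nat => nu (b (beta - m%:R))))).
  by apply: (xinfP _).1; exists b; split => //; exact: (unit_sol_Sol iota charC0 ell0_neq0 ellr_neq0).
have := xle_trans f_int hv; rewrite actA_unit_sol //.
have hL : xle (Fin 0) (xliminf (fun m : nat => nu (b (beta - m%:R)))).
  apply: xle_trans; last by apply: (xsupP _).1; exists 0%N; reflexivity.
  apply: (xinfP _).2 => w [m [_ ->]]; apply: nu_ge; apply: (unit_sol_vanish_left charC0 ell0_neq0 ellr_neq0) => k k_gt0.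
  by have [] := ell_ends_unit_left k_gt0.
move: hL (nu_le fi_n); case: (nu _) => [|x|] //=; case: (xliminf _) => [|y|] //=; lia.
Qed.

Lemma Spowers_local_integral_basis : local_integral_basis iota ell beta (@Spowers C r).
Proof.
split; first exact: Spowers_integral.
split; last by move=> c _; rewrite lincomb_Spowers => ->.
move=> f f_int; exists f; split; last by rewrite lincomb_Spowers.
exact: integral_at_local.
Qed.

End LocalIntegralBasis.

Theorem mainTheorem1
  (C : fieldType) (K : closedFieldType) (iota : {rmorphism C -> K})
  (charC0 : [pchar C] =i pred0)
  (Kalg : forall z : K, exists p : {poly C}, p != 0 /\ root (map_poly iota p) z)
  (r : nat) (ell : 'I_r.+1 -> {poly C})
  (ell0_neq0 : ell ord0 != 0) (ellr_neq0 : ell ord_max != 0)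
  (alpha zeta : K) (zeta_in : in_coset alpha zeta)
  (noroots : forall eta : K, in_coset alpha eta ->
      (exists k : int, k < 0 /\ eta - zeta = k%:~R) ->
      ~~ root (map_poly iota (ell ord0 * ell ord_max)) eta) :
  forall beta : K,
    (in_coset alpha beta /\ (exists k : int, k < 0 /\ beta - zeta = k%:~R)) \/ beta = zeta ->
    local_integral_basis iota ell beta (@Spowers C r).
Proof.
move=> beta hbeta; apply: Spowers_local_integral_basis => //.
have [kb [[p beta_p] beta_kb kb_le0]] :
    exists kb : int, [/\ in_coset alpha beta, beta - zeta = kb%:~R & kb <= 0].
  case: hbeta => [[hb [k [k_lt0 hk]]]|->]; first by exists k; split => //; exact: ltW.
  by exists 0; split; rewrite ?subrr.
move=> m m_gt0; apply: noroots.
  by exists (p - m%:Z); rewrite beta_p intrB -pmulrn addrA.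
by exists (kb - m%:Z); split; [lia | rewrite addrAC beta_kb intrB -pmulrn].
Qed.
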